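(* Let $E(x)=2^{2^{2^x}}$. For any strictly increasing sequence of natural numbers $3\leq x_0<x_1<\dots<x_{E(x_0)+8}$ we have $\omega^3[x_0][x_1]\cdots[x_{E(x_0)+8}]>0$.
   Context: Ordinals are notations below $\varepsilon_0$, i.e. formal sums $\omega^{\alpha_0}+\dots+\omega^{\alpha_n}$ with non-increasing exponents (the empty sum is $0$), ordered lexicographically (Cantor normal form order). Write $1=\omega^0$, $\omega=\omega^1$, and $\omega^3=\omega^{1+1+1}$. Fundamental sequences, for $\alpha=\omega^{\alpha_0}+\dots+\omega^{\alpha_n}$ and $x\in\mathbb{N}$: $0[x]=0$. If $\alpha_n=0$ then $\alpha[x]=\omega^{\alpha_0}+\dots+\omega^{\alpha_{n-1}}$. If $\alpha_n=\beta+1$ then $\alpha[x]=\omega^{\alpha_0}+\dots+\omega^{\alpha_{n-1}}+\omega^\beta\cdot x$ ($x$ copies of $\omega^\beta$). If $\alpha_n$ is a nonzero non-successor then $\alpha[x]=\omega^{\alpha_0}+\dots+\omega^{\alpha_{n-1}}+\omega^{\alpha_n[x]}$. $\alpha[x_0]\cdots[x_R]$ denotes iterated application. *)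

From Stdlib Require Import Arith List.
Import ListNotations.

(* [Plus a b] denotes  omega^a + b ; a notation
   omega^{a_0} + ... + omega^{a_n} is  Plus a_0 (Plus a_1 ... (Plus a_n Zero)). *)
Inductive ON : Type :=
| Zero : ON
| Plus : ON -> ON -> ON.

Inductive olt : ON -> ON -> Prop :=
| olt_zero a b : olt Zero (Plus a b)
| olt_exp a b c d : olt a c -> olt (Plus a b) (Plus c d)
| olt_tail a b d : olt b d -> olt (Plus a b) (Plus a d).

Fixpoint is_succ (a : ON) : bool :=
  match a with
  | Zero => false
  | Plus e Zero => match e with Zero => true | _ => false end
  | Plus _ b => is_succ b
  end.

Definition omega_mul (b : ON) (x : nat) : ON := Nat.iter x (Plus b) Zero.

Fixpoint fs (a : ON) (x : nat) : ON :=
  match a with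
  | Zero => Zero
  | Plus e b =>
      match b with
      | Zero =>
          match e with
          | Zero => Zero
          | Plus _ _ =>
              if is_succ e then omega_mul (fs e x) x      (* e = beta+1; e[x] = beta *)
              else Plus (fs e x) Zero
          end
      | Plus _ _ => Plus e (fs b x)
      end
  end.

Definition fs_iter (a : ON) (xs : list nat) : ON :=
  fold_left fs xs a.

Definition one : ON := Plus Zero Zero.
Definition three : ON := Plus Zero (Plus Zero (Plus Zero Zero)).
Definition omega3 : ON := Plus three Zero.

Definition E (x : nat) : nat := 2 ^ (2 ^ (2 ^ x)).

From Stdlib Require Import Arith List Lia.

(* Below omega^3 every ordinal is omega^2*a + omega*b + c, and one step [x]
   decrements c, or trades the last omega for x ones, or the last omega^2 for
   x omegas.  Along a sequence with x_i >= x_0 + i, consuming an omega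
   therefore at least doubles the current index n, and consuming an omega^2
   lifts it to at least 2^n.  Starting from omega^3[x_0] = omega^2*x_0, the
   run only reaches omega after an index exceeding E(x_0) + 8; since 0 is a
   fixed point of every [x], all earlier values are nonzero. *)

Definition two : ON := Plus Zero one.

Definition cnf2 (a b c : nat) : ON :=
  Nat.iter a (Plus two) (Nat.iter b (Plus one) (Nat.iter c (Plus Zero) Zero)).

Lemma iter_Plus_neq0 k e t : t <> Zero -> Nat.iter k (Plus e) t <> Zero.
Proof. destruct k; [auto | discriminate]. Qed.

Lemma fs_Plus_neq0 e t x : t <> Zero -> fs (Plus e t) x = Plus e (fs t x).
Proof. destruct t; [congruence | reflexivity]. Qed.

Lemma fs_iter_Plus k e t x :
  t <> Zero -> fs (Nat.iter k (Plus e) t) x = Nat.iter k (Plus e) (fs t x).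
Proof.
  intro Ht; induction k as [|k IH]; [reflexivity |].
  rewrite !Nat.iter_succ, fs_Plus_neq0 by now apply iter_Plus_neq0.
  now rewrite IH.
Qed.

Ltac iter_neq0 := repeat apply iter_Plus_neq0; discriminate.

Lemma fs_cnf2_c a b c x : fs (cnf2 a b (S c)) x = cnf2 a b c.
Proof.
  unfold cnf2; rewrite Nat.iter_succ_r, !fs_iter_Plus by iter_neq0.
  reflexivity.
Qed.

Lemma fs_cnf2_b a b x : fs (cnf2 a (S b) 0) x = cnf2 a b x.
Proof.
  unfold cnf2; rewrite Nat.iter_succ_r, !fs_iter_Plus by iter_neq0.
  reflexivity.
Qed.

Lemma fs_cnf2_a a x : fs (cnf2 (S a) 0 0) x = cnf2 a x 0.
Proof.
  unfold cnf2; rewrite Nat.iter_succ_r, fs_iter_Plus by iter_neq0.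
  reflexivity.
Qed.

Lemma fs_omega3 x : fs omega3 x = cnf2 x 0 0.
Proof. reflexivity. Qed.

Lemma olt_Zero_neq0 o : o <> Zero -> olt Zero o.
Proof. destruct o; [congruence | constructor]. Qed.

Definition fs_run (y : nat -> nat) (n j : nat) (o : ON) : ON :=
  fs_iter o (map y (seq n j)).

Lemma fs_run_add y n j k o :
  fs_run y n (j + k) o = fs_run y (n + j) k (fs_run y n j o).
Proof. unfold fs_run, fs_iter. now rewrite seq_app, map_app, fold_left_app. Qed.

Lemma fs_run_Zero y n j : fs_run y n j Zero = Zero.
Proof. revert n; induction j as [|j IH]; intro n; [reflexivity | apply (IH (S n))]. Qed.

Lemma fs_run_ext y z n j o :
  (forall i, n <= i < n + j -> y i = z i) -> fs_run y n j o = fs_run z n j o.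
Proof.
  intro Hyz; unfold fs_run; f_equal.
  apply map_ext_in; intros i Hi; apply in_seq in Hi; apply Hyz; lia.
Qed.

Definition runs_to (y : nat -> nat) (n : nat) (o : ON) (m : nat) (o' : ON) : Prop :=
  exists j, n + j = m /\ fs_run y n j o = o'.

Lemma runs_to_refl y n o : runs_to y n o n o.
Proof. exists 0; split; [lia | reflexivity]. Qed.

Lemma runs_to_step y n o : runs_to y n o (S n) (fs o (y n)).
Proof. exists 1; split; [lia | reflexivity]. Qed.

Lemma runs_to_trans y n o m o' p o'' :
  runs_to y n o m o' -> runs_to y m o' p o'' -> runs_to y n o p o''.
Proof.
  intros [j [<- Hj]] [k [<- Hk]].
  exists (j + k); split; [lia |]. now rewrite fs_run_add, Hj.
Qed.

Lemma runs_to_prefix_neq0 y n o m o' k :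
  runs_to y n o m o' -> o' <> Zero -> n + k <= m -> fs_run y n k o <> Zero.
Proof.
  intros [j [<- Hj]] Ho' Hk H0.
  replace j with (k + (j - k)) in Hj by lia.
  rewrite fs_run_add, H0, fs_run_Zero in Hj. now apply Ho'.
Qed.

Lemma runs_to_cnf2_c y a b c n : runs_to y n (cnf2 a b c) (n + c) (cnf2 a b 0).
Proof.
  revert n; induction c as [|c IH]; intro n.
  - rewrite Nat.add_0_r; apply runs_to_refl.
  - eapply runs_to_trans; [apply runs_to_step |].
    rewrite fs_cnf2_c, <- Nat.add_succ_comm; apply IH.
Qed.

Lemma runs_to_iter y d (P : nat -> ON) (f : nat -> nat) :
  (forall u v, u <= v -> f u <= f v) ->
  (forall r n, exists m, runs_to y n (P (S r)) m (P r) /\ f (n + d) <= m + d) ->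
  forall k r n, exists m,
    runs_to y n (P (k + r)) m (P r) /\ Nat.iter k f (n + d) <= m + d.
Proof.
  intros Hmono Hstep k; induction k as [|k IH]; intros r n.
  - exists n; split; [apply runs_to_refl | reflexivity].
  - destruct (IH (S r) n) as [m1 [R1 B1]].
    destruct (Hstep r m1) as [m2 [R2 B2]].
    exists m2; split.
    + rewrite Nat.add_succ_comm; eapply runs_to_trans; eassumption.
    + rewrite Nat.iter_succ; apply Hmono in B1; lia.
Qed.

Lemma iter_double k u : Nat.iter k (Nat.mul 2) u = 2 ^ k * u.
Proof.
  induction k as [|k IH]; [simpl; lia |].
  rewrite Nat.iter_succ, IH, Nat.pow_succ_r'; lia.
Qed.

Lemma iter_inflationary (f : nat -> nat) :
  (forall u, u <= f u) -> forall k u, u <= Nat.iter k f u.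
Proof.
  intros Hf k u; induction k as [|k IH]; [reflexivity |].
  rewrite Nat.iter_succ; etransitivity; [exact IH | apply Hf].
Qed.

Lemma iter_le_count (f : nat -> nat) k l u :
  (forall u, u <= f u) -> k <= l -> Nat.iter k f u <= Nat.iter l f u.
Proof.
  intros Hf Hkl; replace l with (l - k + k) by lia.
  rewrite Nat.iter_add; apply iter_inflationary, Hf.
Qed.

Lemma double_le_pow2 u : 2 * u <= 2 ^ u.
Proof.
  destruct u as [|u]; [simpl; lia |].
  rewrite Nat.pow_succ_r'; pose proof (Nat.pow_gt_lin_r 2 u); lia.
Qed.

Lemma E_ge d : 3 <= d -> d + 9 <= E d.
Proof.
  intro Hd; unfold E.
  assert (2 ^ 3 <= 2 ^ d) by (apply Nat.pow_le_mono_r; lia).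
  pose proof (Nat.pow_gt_lin_r 2 d).
  pose proof (Nat.pow_gt_lin_r 2 (2 ^ d)).
  pose proof (double_le_pow2 (2 ^ 2 ^ d)).
  simpl (2 ^ 3) in *; lia.
Qed.

Lemma E_le_iter_pow2 d : 3 <= d -> E d + 9 + d <= Nat.iter d (Nat.pow 2) (S d).
Proof.
  intro Hd.
  assert (Hcount : Nat.iter 3 (Nat.pow 2) (S d) <= Nat.iter d (Nat.pow 2) (S d)).
  { apply iter_le_count; [| exact Hd].
    intro u; apply Nat.lt_le_incl, Nat.pow_gt_lin_r; lia. }
  assert (H2E : 2 * E d <= 2 ^ 2 ^ 2 ^ S d).
  { unfold E; rewrite <- Nat.pow_succ_r'.
    apply Nat.pow_le_mono_r; [lia |].
    apply Nat.pow_lt_mono_r; [lia |]. apply Nat.pow_lt_mono_r; lia. }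
  change (Nat.iter 3 (Nat.pow 2) (S d)) with (2 ^ 2 ^ 2 ^ S d) in Hcount.
  pose proof (E_ge d Hd); lia.
Qed.

Section Growth.

Variables (y : nat -> nat) (d : nat).
Hypothesis y_ge : forall i, i + d <= y i.

Lemma run_omega_step a b n :
  exists m, runs_to y n (cnf2 a (S b) 0) m (cnf2 a b 0) /\ 2 * (n + d) <= m + d.
Proof.
  exists (S n + y n); split.
  - eapply runs_to_trans; [apply runs_to_step |].
    rewrite fs_cnf2_b; apply runs_to_cnf2_c.
  - specialize (y_ge n); lia.
Qed.

Lemma run_omega_mul a k r n :
  exists m, runs_to y n (cnf2 a (k + r) 0) m (cnf2 a r 0) /\ 2 ^ k * (n + d) <= m + d.
Proof.
  destruct (runs_to_iter y d (fun b => cnf2 a b 0) (Nat.mul 2)) with k r n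
    as [m [R B]].
  - intros u v; lia.
  - apply run_omega_step.
  - exists m; rewrite <- iter_double; auto.
Qed.

Lemma run_omega2_to a r n :
  r <= y n ->
  exists m, runs_to y n (cnf2 (S a) 0 0) m (cnf2 a r 0) /\
            2 ^ (y n - r) * S (n + d) <= m + d.
Proof.
  intro Hr.
  destruct (run_omega_mul a (y n - r) r (S n)) as [m [R B]].
  exists m; split; [| exact B].
  eapply runs_to_trans; [apply runs_to_step |].
  rewrite fs_cnf2_a; replace (y n) with (y n - r + r) by lia; exact R.
Qed.

Lemma run_omega2_step a n :
  exists m, runs_to y n (cnf2 (S a) 0 0) m (cnf2 a 0 0) /\ 2 ^ (n + d) <= m + d.
Proof.
  destruct (run_omega2_to a 0 n) as [m [R B]]; [lia |].
  exists m; split; [exact R |].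
  assert (2 ^ (n + d) <= 2 ^ y n) by (apply Nat.pow_le_mono_r; auto).
  rewrite Nat.sub_0_r in B; nia.
Qed.

Lemma run_omega2_to_omega a n :
  0 < d ->
  exists m, runs_to y n (cnf2 (S a) 0 0) m (cnf2 a 1 0) /\ 2 ^ (n + d) <= m + d.
Proof.
  intro Hd; pose proof (y_ge n).
  destruct (run_omega2_to a 1 n) as [m [R B]]; [lia |].
  exists m; split; [exact R |].
  assert (2 ^ (n + d) <= 2 ^ S (y n - 1)) by (apply Nat.pow_le_mono_r; lia).
  rewrite Nat.pow_succ_r' in *; nia.
Qed.

Lemma run_omega2_mul k r n :
  exists m, runs_to y n (cnf2 (k + r) 0 0) m (cnf2 r 0 0) /\
            Nat.iter k (Nat.pow 2) (n + d) <= m + d.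
Proof.
  apply (runs_to_iter y d (fun a => cnf2 a 0 0)).
  - intros u v; apply Nat.pow_le_mono_r; lia.
  - apply run_omega2_step.
Qed.

Lemma run_omega3_long :
  3 <= d -> y 0 = d ->
  exists m, runs_to y 0 omega3 m (cnf2 0 1 0) /\ E d + 9 <= m.
Proof.
  intros Hd Hy0.
  destruct (run_omega2_mul (d - 1) 1 1) as [m1 [R1 B1]].
  destruct (run_omega2_to_omega 0 m1) as [m2 [R2 B2]]; [lia |].
  exists m2; split.
  - eapply runs_to_trans; [apply runs_to_step |].
    rewrite Hy0, fs_omega3; replace d with (d - 1 + 1) by lia.
    eapply runs_to_trans; eassumption.
  - assert (Nat.iter d (Nat.pow 2) (S d) <= 2 ^ (m1 + d)).
    { replace (Nat.iter d _ _) with (2 ^ Nat.iter (d - 1) (Nat.pow 2) (S d))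
        by (rewrite <- Nat.iter_succ; f_equal; lia).
      apply Nat.pow_le_mono_r; [lia | exact B1]. }
    pose proof (E_le_iter_pow2 d Hd); lia.
Qed.

End Growth.

Lemma strict_incr_lower_bound (x : nat -> nat) k :
  (forall i, i < k -> x i < x (S i)) -> forall i, i <= k -> x 0 + i <= x i.
Proof.
  intros Hinc i; induction i as [|i IH]; intro Hi; [lia |].
  pose proof (IH ltac:(lia)); pose proof (Hinc i ltac:(lia)); lia.
Qed.

Theorem lemma2p8 :
  forall x : nat -> nat,
    3 <= x 0 ->
    (forall i, i < E (x 0) + 8 -> x i < x (S i)) ->
    olt Zero (fs_iter omega3 (map x (seq 0 (E (x 0) + 9)))).
Proof.
  intros x Hx0 Hinc.
  set (d := x 0) in *; set (N := E d + 9).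
  set (y := fun i => Nat.max (x i) (i + d)).
  assert (y_ge : forall i, i + d <= y i) by (intro; apply Nat.le_max_r).
  assert (Hyx : forall i, i < N -> y i = x i).
  { intros i Hi; apply Nat.max_l; rewrite Nat.add_comm.
    apply (strict_incr_lower_bound x (E d + 8)); [exact Hinc | unfold N in Hi; lia]. }
  destruct (run_omega3_long y d y_ge Hx0) as [m [Hrun Hm]].
  { apply Hyx; unfold N; lia. }
  change (olt Zero (fs_run x 0 N omega3)).
  rewrite <- (fs_run_ext y x) by (intros i Hi; apply Hyx; lia).
  apply olt_Zero_neq0; eapply runs_to_prefix_neq0; [exact Hrun | discriminate | lia].
Qed.
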